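(* Let $\mathbf{G}$ be $\mathrm{SO}(D)$ or $\mathrm{O}(D)$, $\tau$ a real representation of $\mathbf{G}$ on $\mathbb{R}^N$, and $\mathcal{D}\in\mathrm{Cov}(\tau,\mathbb{R}^N)$ a regular operator with associated nuclear space $\mathcal{F}$. Let $\eta$ be a $\tau$-covariant generalized random field indexed by $\mathcal{S}(\mathbb{R}^D)\otimes\mathbb{R}^N$, and let $\varphi$ be the weak solution of $\tilde{\mathcal{D}}\varphi=\eta$, i.e. the generalized random field indexed by $\mathcal{F}$ with $\langle\varphi,f\rangle\cong\langle\eta,\mathcal{D}^{-1}f\rangle$ (equality in law) for all $f\in\mathcal{F}$. If $T^\tau_g$ acts in $\mathcal{F}$ for all $g\in\mathbf{G}$, then $\varphi$ is a $\tau$-covariant random field.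
   Context: $\mathrm{Cov}(\tau,\mathbb{R}^N)$ is the set of operators $\mathcal{D}=\sum_jB_j\partial/\partial x_j+mE$ ($B_j$ real $N\times N$ matrices, $m\in\mathbb{R}$) commuting with $T^\tau_g$ for all $g\in\mathbf{G}$, where $(T^\tau_gf)(x)=\tau(g)f(g^{-1}x)$. $\tilde{\mathcal{D}}$ is the transpose of $\mathcal{D}$ under the canonical pairing of $\mathcal{S}'(\mathbb{R}^D)\otimes\mathbb{R}^N$ with $\mathcal{S}(\mathbb{R}^D)\otimes\mathbb{R}^N$. $\mathcal{D}$ is regular if there is a nuclear space $\mathcal{F}$ on which the principal Green function $\mathcal{D}^{-1}$ is defined and maps $\mathcal{F}$ continuously into $\mathcal{S}(\mathbb{R}^D)\otimes\mathbb{R}^N$. A generalized random field $\xi$ indexed by a space $\mathcal{F}$ is $\tau$-covariant if $T^\tau_g$ acts in $\mathcal{F}$ and $\langle\xi,T^\tau_gf\rangle\cong\langle\xi,f\rangle$ in law for all $g\in\mathbf{G}$, $f\in\mathcal{F}$. *)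

From HB Require Import structures.
From mathcomp Require Import all_boot all_order all_algebra.
From mathcomp Require Import all_classical all_reals all_analysis.
Set Implicit Arguments. Unset Strict Implicit. Unset Printing Implicit Defensive.
Import Order.TTheory GRing.Theory Num.Theory.
Import numFieldNormedType.Exports.
Local Open Scope classical_set_scope.
Local Open Scope ring_scope.

Section Defs.
Variable R : realType.
Variables D N : nat.

Definition field := 'cV[R]_D -> 'cV[R]_N.

Definition ebasis (j : 'I_D) : 'cV[R]_D := delta_mx j 0.

Fixpoint pderiv (l : seq 'I_D) (f : field) : field :=
  match l with
  | [::] => f
  | j :: l' => fun x => 'D_(ebasis j) (pderiv l' f) x
  end.

Definition schwartz (f : field) : Prop :=
  (forall (l : seq 'I_D) (j : 'I_D) (x : 'cV[R]_D),
      derivable (pderiv l f) x (ebasis j)) /\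
  (forall (k : nat) (l : seq 'I_D), exists M : R, forall x : 'cV[R]_D,
      (1 + `|x|) ^+ k * `|pderiv l f x| <= M).

Definition Ggroup (special : bool) : set 'M[R]_D :=
  [set g | g^T *m g = 1%:M /\ (special -> \det g = 1)].

Definition representation (G : set 'M[R]_D) (tau : 'M[R]_D -> 'M[R]_N) : Prop :=
  (forall g h, G g -> G h -> tau (g *m h) = tau g *m tau h) /\
  tau 1%:M = 1%:M /\
  {within G, continuous tau}.

Definition Tact (tau : 'M[R]_D -> 'M[R]_N) (g : 'M[R]_D) (f : field) : field :=
  fun x => tau g *m f (invmx g *m x).

Definition Dop (B : 'I_D -> 'M[R]_N) (m : R) (f : field) : field :=
  fun x => \sum_(j < D) B j *m 'D_(ebasis j) f x + m *: f x.

Definition Cov (G : set 'M[R]_D) (tau : 'M[R]_D -> 'M[R]_N)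
    (B : 'I_D -> 'M[R]_N) (m : R) : Prop :=
  forall g, G g -> forall f, schwartz f -> forall x,
    Dop B m (Tact tau g f) x = Tact tau g (Dop B m f) x.

Definition lincomb (a : R) (f : field) (b : R) (h : field) : field :=
  fun x => a *: f x + b *: h x.

Definition subspace (F : set field) : Prop :=
  F (fun _ => 0) /\ forall a b f h, F f -> F h -> F (lincomb a f b h).

(* D is regular with space F and principal Green function Dinv:
   Dinv maps F into the Schwartz space and is the inverse of D there. *)
Definition regular_with (B : 'I_D -> 'M[R]_N) (m : R)
    (F : set field) (Dinv : field -> field) : Prop :=
  subspace F /\ F `<=` schwartz /\
  (forall f, F f -> schwartz (Dinv f) /\ forall x, Dop B m (Dinv f) x = f x) /\
  (forall u, schwartz u -> F (Dop B m u) -> Dinv (Dop B m u) = u).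

Definition law_eq {d1 d2 : measure_display}
    {T1 : measurableType d1} {T2 : measurableType d2}
    (P1 : probability T1 R) (X : T1 -> R)
    (P2 : probability T2 R) (Y : T2 -> R) : Prop :=
  forall A : set R, measurable A -> P1 (X @^-1` A) = P2 (Y @^-1` A).

Definition random_field {d : measure_display} {T : measurableType d}
    (F : set field) (P : probability T R) (X : field -> T -> R) : Prop :=
  (forall f, F f -> measurable_fun setT (X f)) /\
  (forall a b f h, F f -> F h ->
     P [set t | X (lincomb a f b h) t <> a * X f t + b * X h t] = 0%E).

Definition covariant {d : measure_display} {T : measurableType d}
    (G : set 'M[R]_D) (tau : 'M[R]_D -> 'M[R]_N)
    (F : set field) (P : probability T R) (X : field -> T -> R) : Prop :=
  (forall g, G g -> forall f, F f -> F (Tact tau g f)) /\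
  (forall g, G g -> forall f, F f -> law_eq P (X (Tact tau g f)) P (X f)).

End Defs.

From HB Require Import structures.
From mathcomp Require Import all_boot all_order all_algebra.
From mathcomp Require Import all_classical all_reals all_analysis.
Import Order.TTheory GRing.Theory Num.Theory.
Import numFieldNormedType.Exports.
Local Open Scope classical_set_scope.
Local Open Scope ring_scope.

(** Since D commutes with every T_g and is injective on the Schwartz space,
    its Green function commutes with every T_g as well:
    D^-1 (T_g f) = T_g (D^-1 f).  Hence
    <phi, T_g f> ~ <eta, D^-1 T_g f> = <eta, T_g D^-1 f> ~ <eta, D^-1 f> ~ <phi, f>,
    the middle step being the covariance of eta. *)

Lemma law_eq_trans (R : realType) (d1 d2 d3 : measure_display)
    (T1 : measurableType d1) (T2 : measurableType d2) (T3 : measurableType d3)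
    (P1 : probability T1 R) (X : T1 -> R) (P2 : probability T2 R) (Y : T2 -> R)
    (P3 : probability T3 R) (Z : T3 -> R) :
  law_eq P1 X P2 Y -> law_eq P2 Y P3 Z -> law_eq P1 X P3 Z.
Proof. by move=> XY YZ A mA; rewrite XY // YZ. Qed.

Lemma law_eq_sym (R : realType) (d1 d2 : measure_display)
    (T1 : measurableType d1) (T2 : measurableType d2)
    (P1 : probability T1 R) (X : T1 -> R) (P2 : probability T2 R) (Y : T2 -> R) :
  law_eq P1 X P2 Y -> law_eq P2 Y P1 X.
Proof. by move=> XY A mA; rewrite XY. Qed.

Section GreenFunction.
Context {R : realType} {D N : nat}.
Context {G : set 'M[R]_D} {tau : 'M[R]_D -> 'M[R]_N}.
Context {B : 'I_D -> 'M[R]_N} {m : R}.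
Context {F : set (field R D N)} {Dinv : field R D N -> field R D N}.
Hypothesis regB : regular_with B m F Dinv.
Hypothesis covB : Cov G tau B m.

Lemma schwartz_Dinv {f} : F f -> schwartz (Dinv f).
Proof. by case: regB => _ [_ [DinvK _]] /DinvK[]. Qed.

Lemma DinvK {f} : F f -> Dop B m (Dinv f) = f.
Proof. by case: regB => _ [_ [DinvK _]] /DinvK[_ ?]; apply/funext. Qed.

Lemma DopK {u} : schwartz u -> F (Dop B m u) -> Dinv (Dop B m u) = u.
Proof. by case: regB => _ [_ [_ DopK]]; apply: DopK. Qed.

Lemma Dop_Tact {g f} : G g -> schwartz f ->
  Dop B m (Tact tau g f) = Tact tau g (Dop B m f).
Proof. by move=> Gg Sf; apply/funext => x; apply: covB. Qed.

Lemma Dinv_Tact {g f} : G g -> F f ->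
    F (Tact tau g f) -> schwartz (Tact tau g (Dinv f)) ->
  Dinv (Tact tau g f) = Tact tau g (Dinv f).
Proof.
move=> Gg Ff Fgf Sgu.
have DTu : Dop B m (Tact tau g (Dinv f)) = Tact tau g f.
  by rewrite (Dop_Tact Gg (schwartz_Dinv Ff)) DinvK.
by rewrite -{1}DTu DopK // DTu.
Qed.

End GreenFunction.

Theorem proposition2p23
  (R : realType) (D N : nat) (special : bool)
  (tau : 'M[R]_D -> 'M[R]_N)
  (Hrep : representation (@Ggroup R D special) tau)
  (B : 'I_D -> 'M[R]_N) (m : R)
  (Hcov : Cov (@Ggroup R D special) tau B m)
  (F : set (field R D N)) (Dinv : field R D N -> field R D N)
  (Hreg : regular_with B m F Dinv)
  (d1 d2 : measure_display) (T1 : measurableType d1) (T2 : measurableType d2)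
  (Peta : probability T1 R) (eta : field R D N -> T1 -> R)
  (Heta_rf : random_field (@schwartz R D N) Peta eta)
  (Heta_cov : covariant (@Ggroup R D special) tau (@schwartz R D N) Peta eta)
  (Pphi : probability T2 R) (phi : field R D N -> T2 -> R)
  (Hphi_rf : random_field F Pphi phi)
  (Hweak : forall f, F f -> law_eq Pphi (phi f) Peta (eta (Dinv f)))
  (Hact : forall g, @Ggroup R D special g -> forall f, F f -> F (Tact tau g f)) :
  covariant (@Ggroup R D special) tau F Pphi phi.
Proof.
split; first exact: Hact.
move=> g Gg f Ff.
have [actS eta_cov] := Heta_cov.
have Su := schwartz_Dinv Hreg Ff.
have Sgu := actS g Gg _ Su.
apply: law_eq_trans (Hweak _ (Hact g Gg f Ff)) _.
rewrite (Dinv_Tact Hreg Hcov) //; last exact: Hact.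
apply: law_eq_trans (eta_cov g Gg _ Su) _.
exact/law_eq_sym/Hweak.
Qed.
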